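(* Let $G$ be a finite non-abelian group satisfying condition (Con). Then the clique number of $\mathcal C_G$ is $\omega(\mathcal C_G)=\max_{u\in G\setminus Z(G)}|C(u)|$. Moreover, with $C(G)=\{v\in G: d(v)-|Z(G)|>0\}$ where $d(v)=|C(v)|-1$ is the degree of $v$ in $\mathcal C_G$: (i) if $C(G)\supsetneq Z(G)$, then $\omega(\mathcal C_G)$ equals the largest eigenvalue of the Laplacian matrix of $\mathcal C_G$ that is strictly smaller than $|G|$ (the second largest distinct eigenvalue); (ii) if $C(G)=Z(G)$, then $\omega(\mathcal C_G)=|Z(G)|+1$.
   Context: For a finite group $G$, the commuting graph $\mathcal C_G$ is the simple undirected graph with vertex set $G$ in which distinct $u,v\in G$ are adjacent iff $uv=vu$. The Laplacian matrix of a simple graph is $L=D-A$ ($A$ adjacency matrix, $D$ diagonal degree matrix). $Z(G)$ is the center of $G$ and $C(v)=\{w\in G: wv=vw\}$ the centralizer of $v$. Condition (Con): for all $u,v\in G\setminus Z(G)$, either $C(u)=C(v)$ or $C(u)\cap C(v)=Z(G)$. The clique number is the maximum size of a set of pairwise adjacent vertices. *)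

From HB Require Import structures.
From mathcomp Require Import all_boot all_order all_algebra all_fingroup all_solvable all_field all_character.
Set Implicit Arguments. Unset Strict Implicit. Unset Printing Implicit Defensive.
Import Order.TTheory GRing.Theory Num.Theory.
Local Open Scope group_scope.

(* Commuting graph C_G of a finite group G : {group gT}: vertex set G,
   distinct u v adjacent iff u * v = v * u. *)

Definition Con (gT : finGroupType) (G : {group gT}) : Prop :=
  forall u v, u \in G :\: 'Z(G) -> v \in G :\: 'Z(G) ->
    'C_G[u] = 'C_G[v] \/ 'C_G[u] :&: 'C_G[v] = 'Z(G).

Definition is_clique (gT : finGroupType) (G : {group gT}) (S : {set gT}) : bool :=
  (S \subset G) && [forall x in S, forall y in S, (x != y) ==> ((x * y)%g == (y * x)%g)].

Definition clique_number (gT : finGroupType) (G : {group gT}) : nat :=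
  \max_(S : {set gT} | is_clique G S) #|S|.

Definition cdeg (gT : finGroupType) (G : {group gT}) (v : gT) : nat :=
  #|'C_G[v]| - 1.

Definition CGset (gT : finGroupType) (G : {group gT}) : {set gT} :=
  [set v in G | #|'Z(G)| < cdeg G v].

(* Laplacian matrix L = D - A of C_G, vertices of G enumerated via enum_val,
   with complex (algebraic) entries so that all eigenvalues exist. *)
Definition laplacian (gT : finGroupType) (G : {group gT}) : 'M[algC]_#|G| :=
  \matrix_(i < #|G|, j < #|G|)
    let x := enum_val i in let y := enum_val j in
    (if i == j then (cdeg G x)%:R
    else if (x * y == y * x)%g then -1 else 0)%R.

From HB Require Import structures.
From mathcomp Require Import all_boot all_order all_algebra all_fingroup all_solvable all_field all_character.
From mathcomp Require Import ring.
Import Order.TTheory GRing.Theory Num.Theory.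
Set Implicit Arguments. Unset Strict Implicit. Unset Printing Implicit Defensive.
Local Open Scope group_scope.

(* Write Z = Z(G), C(u) = C_G(u) and omega = max_{u in G \ Z} |C(u)|.
   1. Every clique containing a noncentral u lies in C(u), and under (Con)
      each C(u) (u noncentral) is abelian, hence a clique; so the clique
      number is omega.
   2. Under (Con), if x is a Laplacian eigenvector for an eigenvalue e outside
      {0, |Z|, |G|} u {|C(h)| : h noncentral}, the eigen-equation
      (|C(h)| - e) x_h = sum_{g in C(h)} x_g, summed first over the centre and
      then over each class C(h) \ Z (on which x is constant), forces x = 0.
      Hence every eigenvalue lies in that set, and those below |G| are <= omega.
   3. If a noncentral u has a second noncentral element b in C(u), then
      C(b) = C(u) and e_u - e_b is an eigenvector for |C(u)|; when Z is a
      proper subset of C(G), any u maximizing |C(u)| has such a b, giving (i).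
   4. If C(G) = Z, every noncentral centralizer is exactly u |: Z, since it
      contains that set and has at most |Z| + 1 elements; this gives (ii). *)

Section Centralizers.
Variables (gT : finGroupType) (G : {group gT}).

Lemma in_centralizer x y : (x \in 'C_G[y]) = (x \in G) && (x * y == y * x).
Proof. by rewrite inE cent1E. Qed.

Lemma centralizer_sym x y : x \in G -> y \in G -> (x \in 'C_G[y]) = (y \in 'C_G[x]).
Proof. by move=> Gx Gy; rewrite !in_centralizer Gx Gy eq_sym. Qed.

Lemma centralizer_self u : u \in G -> u \in 'C_G[u].
Proof. by move=> Gu; rewrite in_centralizer Gu eqxx. Qed.

Lemma center_sub_centralizer u : u \in G -> 'Z(G) \subset 'C_G[u].
Proof.
move=> Gu; apply/subsetP=> z Zz; rewrite in_centralizer.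
by case/centerP: Zz => Gz cGz; rewrite Gz (cGz u Gu) eqxx.
Qed.

Lemma centralizer_central h : h \in 'Z(G) -> 'C_G[h] = G.
Proof. by case/centerP=> _ cGh; apply/setIidPl/subsetP=> x /cGh cxh; rewrite cent1E cxh. Qed.

Lemma centralizer_noncentral_proper u : u \in G :\: 'Z(G) -> 'C_G[u] \proper G.
Proof.
case/setDP=> Gu nZu; rewrite properEneq subsetIl andbT; apply: contra nZu => /eqP CuG.
apply/centerP; split=> // x Gx.
by move: Gx; rewrite -{1}CuG in_centralizer => /andP[_ /eqP].
Qed.

(* C(u) contains Z and, for u noncentral, also u itself. *)
Lemma center_lt_centralizer u : u \in G :\: 'Z(G) -> #|'Z(G)| < #|'C_G[u]|.
Proof.
case/setDP=> Gu nZu; apply/proper_card/properP; split; first exact: center_sub_centralizer.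
by exists u; first exact: centralizer_self.
Qed.

(* A centralizer with more than |Z| + 1 elements contains a noncentral
   element other than u, as u |: Z is too small to exhaust it. *)
Lemma large_centralizer_noncentral u : #|'Z(G)|.+1 < #|'C_G[u]| ->
  exists2 b, b \in 'C_G[u] :\: 'Z(G) & b != u.
Proof.
move=> big_u; have : ~~ ('C_G[u] \subset u |: 'Z(G)).
  apply/negP=> /subset_leq_card le_Cu; move: big_u.
  by rewrite ltnNge (leq_trans le_Cu) // cardsU1 -add1n leq_add2r leq_b1.
case/subsetPn=> b Cb; rewrite in_setU1 negb_or => /andP[nbu nZb].
by exists b; rewrite // inE nZb Cb.
Qed.

Lemma clique_sub_centralizer (S : {set gT}) u : is_clique G S -> u \in S -> S \subset 'C_G[u].
Proof.
case/andP=> sSG /forall_inP cS Su; apply/subsetP=> x Sx.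
rewrite in_centralizer (subsetP sSG x Sx) /=; case: (eqVneq x u) => [->//|nxu].
by move/forall_inP/(_ u Su): (cS x Sx); rewrite nxu.
Qed.

Lemma abelian_clique (S : {set gT}) : S \subset G -> abelian S -> is_clique G S.
Proof.
move=> sSG /centsP cSS; rewrite /is_clique sSG; apply/forall_inP=> x Sx.
by apply/forall_inP=> y Sy; apply/implyP=> _; apply/eqP/(cSS x Sx y Sy).
Qed.

Lemma noncentral_exists : ~~ abelian G -> exists u, u \in G :\: 'Z(G).
Proof.
move=> nabG; have [noZ|[u Gu]] := set_0Vmem (G :\: 'Z(G)); last by exists u.
by case/negP: nabG; apply: abelianS (center_abelian G); rewrite -setD_eq0 noZ.
Qed.

End Centralizers.

Section ConditionCon.
Variables (gT : finGroupType) (G : {group gT}).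
Hypothesis hCon : Con G.

(* Under (Con), a noncentral element of C(u) has the same centralizer as u:
   the intersection C(u) :&: C(v) contains u, so it is not Z. *)
Lemma Con_centralizer_eq u v :
  u \in G :\: 'Z(G) -> v \in 'C_G[u] -> v \notin 'Z(G) -> 'C_G[v] = 'C_G[u].
Proof.
move=> Hu Cv nZv; have /setDP[Gu nZu] := Hu.
have /andP[Gv /eqP cvu] : (v \in G) && (v * u == u * v) by rewrite -in_centralizer.
have Hv : v \in G :\: 'Z(G) by rewrite inE nZv Gv.
case: (hCon Hv Hu) => // capZ; case/negP: nZu.
by rewrite -capZ inE centralizer_self // in_centralizer Gu cvu eqxx.
Qed.

Lemma Con_centralizer_abelian u : u \in G :\: 'Z(G) -> abelian 'C_G[u].
Proof.
move=> Hu; apply/centsP=> x Cx y Cy; have Gy : y \in G by case/setIP: Cy.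
have [Zx|nZx] := boolP (x \in 'Z(G)).
  by case/centerP: Zx => _ /(_ y Gy).
move: Cy; rewrite -(Con_centralizer_eq Hu Cx nZx) in_centralizer => /andP[_ /eqP cyx].
exact/esym.
Qed.

(* The clique number is the largest noncentral centralizer: cliques inside Z
   are dominated by any C(u), others lie in some C(u), and each C(u) is a
   clique. *)
Lemma clique_number_max : ~~ abelian G ->
  clique_number G = \max_(u in G :\: 'Z(G)) #|'C_G[u]|.
Proof.
move=> nabG; have [u0 Hu0] := noncentral_exists nabG.
have Gu0 : u0 \in G by case/setDP: Hu0.
apply/eqP; rewrite eqn_leq; apply/andP; split.
  apply/bigmax_leqP=> S clqS.
  have [sSZ|/subsetPn[u Su nZu]] := boolP (S \subset 'Z(G)).
    apply: leq_trans (subset_leq_card sSZ) _.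
    apply: leq_trans (subset_leq_card (center_sub_centralizer Gu0)) _.
    exact: leq_bigmax_cond Hu0.
  have Hu : u \in G :\: 'Z(G).
    by rewrite inE nZu (subsetP (proj1 (andP clqS)) u Su).
  apply: leq_trans (leq_bigmax_cond _ Hu).
  exact/subset_leq_card/clique_sub_centralizer.
apply/bigmax_leqP=> u Hu; apply: leq_bigmax_cond.
by apply: abelian_clique (subsetIl _ _) (Con_centralizer_abelian Hu).
Qed.

End ConditionCon.

Local Open Scope ring_scope.

Section ScaledSums.
Variables (T : finType) (R : comPzRingType) (f : T -> R) (beta sigma : R).

Lemma scaled_sum_const (A : {set T}) :
  {in A, forall k, beta * f k = sigma} -> beta * \sum_(k in A) f k = #|A|%:R * sigma.
Proof. by move=> Hf; rewrite mulr_sumr (eq_bigr _ Hf) sumr_const mulr_natl. Qed.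

Lemma scaled_sum_split (A B : {set T}) : B \subset A ->
  {in A :\: B, forall k, beta * f k = sigma} ->
  beta * \sum_(k in A) f k = beta * \sum_(k in B) f k + #|A :\: B|%:R * sigma.
Proof.
move=> sBA Hf; rewrite (big_setID B) /= (setIidPr sBA) mulrDr.
by rewrite (scaled_sum_const Hf).
Qed.

End ScaledSums.

Lemma card_setD_split (T : finType) (A B : {set T}) : B \subset A ->
  #|A| = (#|B| + #|A :\: B|)%N.
Proof. by move=> sBA; rewrite -(cardsID B A) (setIidPr sBA). Qed.

Section SpectralEquation.
Variables (gT : finGroupType) (G : {group gT}) (F : idomainType).
Hypothesis hCon : Con G.
Variables (f : gT -> F) (e : F).
Hypothesis eigen_eq :
  forall h, h \in G -> (#|'C_G[h]|%:R - e) * f h = \sum_(g in 'C_G[h]) f g.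
Hypotheses (e_neq0 : e != 0) (e_neqZ : e != #|'Z(G)|%:R) (e_neqG : e != #|G|%:R).
Hypothesis e_neqC : forall h, h \in G :\: 'Z(G) -> e != #|'C_G[h]|%:R.

Local Notation sumZ := (\sum_(g in 'Z(G)) f g).
Local Notation sumG := (\sum_(g in G) f g).

Let G_sub_e_neq0 : #|G|%:R - e != 0. Proof. by rewrite subr_eq0 eq_sym. Qed.
Let Z_sub_e_neq0 : #|'Z(G)|%:R - e != 0. Proof. by rewrite subr_eq0 eq_sym. Qed.

(* On the centre, C(h) = G. *)
Lemma spectral_central h : h \in 'Z(G) -> (#|G|%:R - e) * f h = sumG.
Proof.
move=> Zh; have Gh : h \in G := subsetP (center_sub G) h Zh.
by have := eigen_eq Gh; rewrite centralizer_central.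
Qed.

(* On a noncentral class C = C(h), all k in C :\: Z satisfy
   (|C| - e) f k = sum_C f; splitting sum_C f along Z eliminates |C|. *)
Lemma spectral_noncentral h : h \in G :\: 'Z(G) -> (#|'Z(G)|%:R - e) * f h = sumZ.
Proof.
move=> Hh; have /setDP[Gh nZh] := Hh.
set C := 'C_G[h]; set S := \sum_(g in C) f g.
have sZC : 'Z(G) \subset C := center_sub_centralizer Gh.
have ce_neq0 : #|C|%:R - e != 0 by rewrite subr_eq0 eq_sym e_neqC.
have eqC : {in C :\: 'Z(G), forall k, (#|C|%:R - e) * f k = S}.
  move=> k /setDP[Ck nZk]; have Gk : k \in G by case/setIP: Ck.
  by rewrite /S /C -(Con_centralizer_eq hCon Hh Ck nZk) eigen_eq.
have splitC := scaled_sum_split sZC eqC; rewrite -/S in splitC.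
have cardC : #|C|%:R = #|'Z(G)|%:R + #|C :\: 'Z(G)|%:R :> F.
  by rewrite (card_setD_split sZC) natrD.
have Ch : h \in C :\: 'Z(G) by rewrite inE nZh centralizer_self.
apply: (mulfI ce_neq0); rewrite mulrCA (eqC h Ch).
have -> : (#|'Z(G)|%:R - e) * S = (#|C|%:R - e) * S - #|C :\: 'Z(G)|%:R * S.
  by rewrite cardC; ring.
by rewrite splitC addrK.
Qed.

(* Summing the central relation over Z and the noncentral one over G :\: Z
   gives e * sum_G f = 0. *)
Lemma spectral_sum_G_eq0 : sumG = 0.
Proof.
have sumZ_eq := scaled_sum_const spectral_central.
have splitG := scaled_sum_split (center_sub G) spectral_noncentral.
have cardG : #|G|%:R = #|'Z(G)|%:R + #|G :\: 'Z(G)|%:R :> F.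
  by rewrite (card_setD_split (center_sub G)) natrD.
apply: (mulfI e_neq0); rewrite mulr0.
have -> : e * sumG = #|'Z(G)|%:R * sumG - (#|'Z(G)|%:R - e) * sumG by ring.
by rewrite splitG -sumZ_eq cardG; ring.
Qed.

(* Then the central relation summed over Z gives sum_Z f = 0. *)
Lemma spectral_sum_Z_eq0 : sumZ = 0.
Proof.
apply: (mulfI G_sub_e_neq0); rewrite mulr0 (scaled_sum_const spectral_central).
by rewrite spectral_sum_G_eq0 mulr0.
Qed.

Lemma spectral_solution_trivial h : h \in G -> f h = 0.
Proof.
move=> Gh; have [Zh|nZh] := boolP (h \in 'Z(G)).
  by apply: (mulfI G_sub_e_neq0); rewrite mulr0 spectral_central // spectral_sum_G_eq0.
apply: (mulfI Z_sub_e_neq0); rewrite mulr0 spectral_noncentral ?spectral_sum_Z_eq0 //.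
by rewrite inE nZh Gh.
Qed.

End SpectralEquation.

Section Laplacian.
Variables (gT : finGroupType) (G : {group gT}).

Definition vertex_fun (x : 'rV[algC]_#|G|) (g : gT) : algC :=
  x 0 (enum_rank_in (group1 G) g).

(* Entry form of the Laplacian: degree on the diagonal is |C(v)| - 1, and
   subtracting adjacency yields |C(v_j)| [i = j] - [v_i commutes with v_j]. *)
Lemma laplacian_matrixE : laplacian G = \matrix_(i, j)
  ((i == j)%:R * #|'C_G[enum_val j]|%:R - (enum_val i \in 'C_G[enum_val j])%:R).
Proof.
apply/matrixP=> i j; rewrite !mxE in_centralizer enum_valP /=; case: eqP => [->|_].
  by rewrite eqxx mul1r /cdeg natrB ?cardG_gt0.
by rewrite mul0r sub0r; case: ifP => _; rewrite ?mulr1n ?mulr0n ?oppr0.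
Qed.

Lemma laplacian_row_action (x : 'rV[algC]_#|G|) j : (x *m laplacian G) 0 j =
  #|'C_G[enum_val j]|%:R * x 0 j - \sum_(i | enum_val i \in 'C_G[enum_val j]) x 0 i.
Proof.
rewrite laplacian_matrixE mxE; under eq_bigr do rewrite mxE mulrBr.
rewrite sumrB (bigD1 j) //= eqxx mul1r big1 ?addr0; last first.
  by move=> i /negPf ->; rewrite mul0r mulr0.
rewrite mulrC; congr (_ - _); rewrite [RHS]big_mkcond; apply: eq_bigr => i _.
by case: ifP; rewrite ?mulr1 ?mulr0.
Qed.

Lemma laplacian_eigen_equation (x : 'rV[algC]_#|G|) e : x *m laplacian G = e *: x ->
  forall h, h \in G ->
  (#|'C_G[h]|%:R - e) * vertex_fun x h = \sum_(g in 'C_G[h]) vertex_fun x g.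
Proof.
move=> Hx h Gh; set j := enum_rank_in (group1 G) h.
have vj : enum_val j = h := enum_rankK_in (group1 G) Gh.
have : (x *m laplacian G) 0 j = (e *: x) 0 j by rewrite Hx.
rewrite laplacian_row_action mxE vj => Ej.
rewrite mulrBl -Ej opprB addrC subrK.
transitivity (\sum_(g in G | g \in 'C_G[h]) vertex_fun x g).
  by rewrite big_enum_val_cond; apply: eq_bigr => i _; rewrite /vertex_fun enum_valK_in.
by apply: eq_bigl => g; apply/andb_idl => /setIP[].
Qed.

Lemma laplacian_spectrum (hCon : Con G) e : eigenvalue (laplacian G) e ->
  [\/ e = 0, e = #|'Z(G)|%:R, e = #|G|%:R
    | exists2 h, h \in G :\: 'Z(G) & e = #|'C_G[h]|%:R].
Proof.
case/eigenvalueP=> x Hx nx0.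
have [->|e0] := eqVneq e 0; first by constructor 1.
have [->|eZ] := eqVneq e #|'Z(G)|%:R; first by constructor 2.
have [->|eG] := eqVneq e #|G|%:R; first by constructor 3.
have [[h Hh /eqP eC]|noC] := @exists_inP _ (mem (G :\: 'Z(G))) (fun h => e == #|'C_G[h]|%:R).
  by constructor 4; exists h.
have eC : forall h, h \in G :\: 'Z(G) -> e != #|'C_G[h]|%:R.
  by move=> h Hh; apply/eqP=> eC; apply: noC; exists h; rewrite ?eC.
have f0 := spectral_solution_trivial hCon (laplacian_eigen_equation Hx) e0 eZ eG eC.
case/eqP: nx0; apply/rowP=> i; rewrite mxE -(enum_valK_in (group1 G) i).
exact/f0/enum_valP.
Qed.

(* If b <> u is a noncentral element of C(u), then e_u - e_b is an
   eigenvector for |C(u)|, since u and b have the same neighbours. *)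
Lemma laplacian_centralizer_eigenvalue (hCon : Con G) u b :
  u \in G :\: 'Z(G) -> b \in 'C_G[u] :\: 'Z(G) -> b != u ->
  eigenvalue (laplacian G) #|'C_G[u]|%:R.
Proof.
move=> Hu /setDP[Cb nZb] nbu; have Gu : u \in G by case/setDP: Hu.
have Gb : b \in G by case/setIP: Cb.
have CbE := Con_centralizer_eq hCon Hu Cb nZb.
set iu := enum_rank_in (group1 G) u; set ib := enum_rank_in (group1 G) b.
have vu : enum_val iu = u := enum_rankK_in (group1 G) Gu.
have vb : enum_val ib = b := enum_rankK_in (group1 G) Gb.
have niu : (iu == ib) = false.
  by apply/negbTE; apply: contra nbu => /eqP eq_iu; rewrite -vu -vb eq_iu.
have same_adj (j : 'I_#|G|) :
    (enum_val iu \in 'C_G[enum_val j]) = (enum_val ib \in 'C_G[enum_val j]).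
  by rewrite vu vb !(centralizer_sym _ (enum_valP j)) // CbE.
apply/eigenvalueP; exists (delta_mx 0 iu - delta_mx 0 ib); last first.
  apply/negP => /eqP /rowP /(_ iu) /eqP.
  by rewrite !mxE !eqxx niu /= subr0 oner_eq0.
apply/rowP => j; rewrite laplacian_matrixE mulmxBl -!rowE !mxE same_adj.
rewrite [LHS](_ : _ = ((iu == j)%:R - (ib == j)%:R) * #|'C_G[enum_val j]|%:R); last by ring.
rewrite eqxx /= mulrC !(eq_sym j).
have [<-|nju] := eqVneq iu j; first by rewrite vu eq_sym niu.
have [<-|njb] := eqVneq ib j; first by rewrite vb CbE.
by rewrite !subrr !mulr0.
Qed.

End Laplacian.

Section CliqueNumberSpectrum.
Variables (gT : finGroupType) (G : {group gT}).
Hypotheses (hCon : Con G) (nabG : ~~ abelian G).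

Local Notation omega := (\max_(u in G :\: 'Z(G)) #|'C_G[u]|)%N.

Lemma omega_attained : exists2 u, u \in G :\: 'Z(G) & omega = #|'C_G[u]|.
Proof.
have [u0 Hu0] := noncentral_exists nabG.
have noncentral_pos : (0 < #|G :\: 'Z(G)|)%N by apply/card_gt0P; exists u0.
by have [u Hu ->] := eq_bigmax_cond (fun u => #|'C_G[u]|) noncentral_pos; exists u.
Qed.

(* Centralizers of noncentral elements are proper, so omega < |G|. *)
Lemma omega_lt_order : (omega < #|G|)%N.
Proof.
by have [u Hu ->] := omega_attained; apply/proper_card/centralizer_noncentral_proper.
Qed.

(* Case (i): some v has |C(v)| > |Z| + 1, so a maximal C(u) contains a
   noncentral b <> u, and omega is an eigenvalue. *)
Lemma omega_eigenvalue : 'Z(G) \proper CGset G -> eigenvalue (laplacian G) omega%:R.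
Proof.
case/properP=> _ [v CGv nZv]; have [u Hu omegaE] := omega_attained.
move: CGv; rewrite /CGset inE /cdeg => /andP[Gv ltZv].
have Hv : v \in G :\: 'Z(G) by rewrite inE nZv Gv.
have big_u : (#|'Z(G)|.+1 < #|'C_G[u]|)%N.
  by rewrite -omegaE (leq_trans _ (leq_bigmax_cond _ Hv)) //; rewrite ltn_subRL in ltZv.
have [b Cb nbu] := large_centralizer_noncentral big_u.
by rewrite omegaE; apply: laplacian_centralizer_eigenvalue Hu Cb nbu.
Qed.

Lemma laplacian_eigenvalue_le_omega e :
  eigenvalue (laplacian G) e -> e < #|G|%:R -> e <= omega%:R.
Proof.
move=> eig_e lt_eG; have [u0 Hu0] := noncentral_exists nabG.
case: (laplacian_spectrum hCon eig_e) => [->|->|eG|[h Hh ->]].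
- by rewrite ler0n.
- by rewrite ler_nat (leq_trans (ltnW (center_lt_centralizer Hu0))) ?leq_bigmax_cond.
- by rewrite eG ltxx in lt_eG.
- by rewrite ler_nat leq_bigmax_cond.
Qed.

(* Case (ii): if C(G) = Z then |C(u)| <= |Z| + 1 for all noncentral u. *)
Lemma omega_center_case : CGset G = 'Z(G) -> omega = (#|'Z(G)| + 1)%N.
Proof.
move=> CGZ; have [u Hu ->] := omega_attained; have /setDP[Gu nZu] := Hu.
apply/eqP; rewrite eqn_leq addn1 center_lt_centralizer // andbT.
have : u \notin CGset G by rewrite CGZ.
by rewrite /CGset inE Gu /cdeg -leqNgt leq_subLR.
Qed.

End CliqueNumberSpectrum.

Theorem proposition3p1 (gT : finGroupType) (G : {group gT}) :
  ~~ abelian G -> Con G ->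
  [/\ clique_number G = (\max_(u in G :\: 'Z(G)) #|'C_G[u]|)%N,
      'Z(G) \proper CGset G ->
        [/\ eigenvalue (laplacian G) (clique_number G)%:R,
            (clique_number G < #|G|)%N &
            forall e : algC, eigenvalue (laplacian G) e ->
              e < #|G|%:R -> e <= (clique_number G)%:R]
    & CGset G = 'Z(G) -> clique_number G = (#|'Z(G)| + 1)%N].
Proof.
move=> nabG hCon; rewrite (clique_number_max hCon nabG); split=> //.
- move=> ZCG; split.
  + exact: omega_eigenvalue.
  + exact: omega_lt_order.
  + exact: laplacian_eigenvalue_le_omega.
- exact: omega_center_case.
Qed.
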